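(* Let $\Gamma=\mathbb{Z}/m_1\mathbb{Z}\times\dots\times\mathbb{Z}/m_l\mathbb{Z}$, written multiplicatively with generators $x_1,\dots,x_l$ ($x_i$ of order $m_i$), so that elements of $\mathbb{C}\Gamma$ are Laurent polynomials $P(x_1,\dots,x_l)$ reduced modulo $x_i^{m_i}=1$. Let $P\in\mathbb{C}\Gamma$ be reciprocal, let $k$ be the $l_1$-norm of its coefficients, and let $|\lambda|<1/k$. For each $i$ let $\xi_{m_i}$ be a primitive $m_i$-th root of unity. Then \[ m_\Gamma(P,\lambda)=\frac{1}{|\Gamma|}\log\left(\prod_{j_1=0}^{m_1-1}\cdots\prod_{j_l=0}^{m_l-1}\Big(1-\lambda P\big(\xi_{m_1}^{j_1},\dots,\xi_{m_l}^{j_l}\big)\Big)\right), \] where $|\Gamma|=m_1\cdots m_l$ and the logarithm of the product is the sum of the principal logarithms of its factors.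
   Context: For a group $\Gamma$ and $Q=\sum_{g\in\Gamma}c_g g\in\mathbb{C}\Gamma$ (finite sum), the reciprocal is $Q^*=\sum_g\overline{c_g}\,g^{-1}$, and $Q$ is reciprocal if $Q=Q^*$. For reciprocal $P\in\mathbb{C}\Gamma$ with $l_1$-norm $k=\sum_g|c_g|$ and $|\lambda|<1/k$, define $m_\Gamma(P,\lambda)=-\sum_{n\ge1}a_n\lambda^n/n$, where $a_n$ is the coefficient of the identity element in $P^n$. *)

From Stdlib Require Import Reals List Arith.
From Coquelicot Require Import Coquelicot.
Import ListNotations.
Open Scope R_scope.

(* The group Gamma = Z/m_1 x ... x Z/m_l is encoded by the list ms = [m_1;...;m_l].
   Its elements are the lists [g_1;...;g_l] of naturals with g_i < m_i,
   g standing for x_1^{g_1} ... x_l^{g_l}. *)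
Fixpoint grp_elems (ms : list nat) : list (list nat) :=
  match ms with
  | [] => [ [] ]
  | m :: ms' => flat_map (fun j => map (cons j) (grp_elems ms')) (seq 0 m)
  end.

Fixpoint grp_mul (ms : list nat) (g h : list nat) : list nat :=
  match ms, g, h with
  | m :: ms', a :: g', b :: h' => ((a + b) mod m)%nat :: grp_mul ms' g' h'
  | _, _, _ => []
  end.

Fixpoint grp_inv (ms : list nat) (g : list nat) : list nat :=
  match ms, g with
  | m :: ms', a :: g' => ((m - a) mod m)%nat :: grp_inv ms' g'
  | _, _ => []
  end.

Definition grp_one (ms : list nat) : list nat := map (fun _ => 0%nat) ms.

(* Elements of C[Gamma]: coefficient functions c : Gamma -> C
   (only values on grp_elems ms matter); Q = sum_g c(g) g. *)
Definition Csum {A : Type} (s : list A) (f : A -> C) : C :=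
  fold_right (fun a acc => Cplus (f a) acc) (RtoC 0) s.

Definition Rsum {A : Type} (s : list A) (f : A -> R) : R :=
  fold_right (fun a acc => f a + acc) 0 s.

Definition gr_mul (ms : list nat) (c d : list nat -> C) : list nat -> C :=
  fun g => Csum (grp_elems ms) (fun h => Cmult (c h) (d (grp_mul ms (grp_inv ms h) g))).

Definition gr_one (ms : list nat) : list nat -> C :=
  fun g => if list_eq_dec Nat.eq_dec g (grp_one ms) then RtoC 1 else RtoC 0.

Fixpoint gr_pow (ms : list nat) (c : list nat -> C) (n : nat) : list nat -> C :=
  match n with
  | O => gr_one ms
  | S n' => gr_mul ms c (gr_pow ms c n')
  end.

Definition reciprocal (ms : list nat) (c : list nat -> C) : Prop :=
  forall g, In g (grp_elems ms) -> c (grp_inv ms g) = Cconj (c g).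

Definition l1norm (ms : list nat) (c : list nat -> C) : R :=
  Rsum (grp_elems ms) (fun g => Cmod (c g)).

Definition coef_id (ms : list nat) (c : list nat -> C) (n : nat) : C :=
  gr_pow ms c n (grp_one ms).

(* general term of the series m_Gamma(P,lambda) = - sum_{n>=1} a_n lambda^n / n *)
Definition mGamma_term (ms : list nat) (c : list nat -> C) (lam : C) (n : nat) : C :=
  match n with
  | O => RtoC 0
  | S _ => Copp (Cdiv (Cmult (coef_id ms c n) (Cpow lam n)) (RtoC (INR n)))
  end.

Fixpoint mono (z : list C) (g : list nat) : C :=
  match z, g with
  | zi :: z', gi :: g' => Cmult (Cpow zi gi) (mono z' g')
  | _, _ => RtoC 1
  end.

Definition gr_eval (ms : list nat) (c : list nat -> C) (z : list C) : C :=
  Csum (grp_elems ms) (fun g => Cmult (c g) (mono z g)).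

Definition prim_root (m : nat) (xi : C) : Prop :=
  Cpow xi m = RtoC 1 /\ forall d : nat, (0 < d < m)%nat -> Cpow xi d <> RtoC 1.

(* principal argument in (-PI, PI] and principal logarithm *)
Definition Arg (z : C) : R :=
  let x := fst z in let y := snd z in
  if Rlt_dec 0 x then atan (y / x)
  else if Rlt_dec x 0 then
    (if Rle_dec 0 y then atan (y / x) + PI else atan (y / x) - PI)
  else if Rlt_dec 0 y then PI / 2
  else if Rlt_dec y 0 then - (PI / 2)
  else 0.

Definition Clog (z : C) : C := (ln (Cmod z), Arg z).

Fixpoint root_point (xi : list C) (j : list nat) : list C :=
  match xi, j with
  | x :: xi', a :: j' => Cpow x a :: root_point xi' j'
  | _, _ => []
  end.

From Stdlib Require Import Reals List Lia Lra.
From Coquelicot Require Import Coquelicot.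
Import ListNotations.
Open Scope R_scope.

(* Evaluation at a point z with z_i^{m_i} = 1 is a character of Gamma, i.e. a ring
   morphism from C[Gamma] to C, and by orthogonality of characters the coefficient of
   the identity in any Q is the mean of Q over the |Gamma| points (xi^{j_1}, ..., xi^{j_l}).
   Hence a_n is the mean of P(xi^j)^n, and since |lambda P(xi^j)| <= |lambda| k < 1 the
   series -sum a_n lambda^n / n splits into |Gamma| series -sum w^n / n = Log (1 - w).
   The latter is checked on real and imaginary parts: along t |-> t w, t in [0, 1], both
   sides vanish at t = 0 and have the same derivative. *)

Open Scope C_scope.

Lemma Csum_cons {A : Type} (a : A) (s : list A) (f : A -> C) :
  Csum (a :: s) f = f a + Csum s f.
Proof. reflexivity. Qed.

Lemma Csum_app {A : Type} (s1 s2 : list A) (f : A -> C) :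
  Csum (s1 ++ s2) f = Csum s1 f + Csum s2 f.
Proof.
  induction s1 as [|a s1 IH]; simpl app.
  - change (Csum [] f) with (RtoC 0). ring.
  - rewrite !Csum_cons, IH. ring.
Qed.

Lemma Csum_map {A B : Type} (g : A -> B) (s : list A) (f : B -> C) :
  Csum (map g s) f = Csum s (fun x => f (g x)).
Proof. induction s as [|a s IH]; [reflexivity|]. simpl map. now rewrite !Csum_cons, IH. Qed.

Lemma Csum_flat_map {A B : Type} (g : A -> list B) (s : list A) (f : B -> C) :
  Csum (flat_map g s) f = Csum s (fun x => Csum (g x) f).
Proof. induction s as [|a s IH]; [reflexivity|]. simpl flat_map. now rewrite Csum_app, Csum_cons, IH. Qed.

Lemma Csum_ext_in {A : Type} (s : list A) (f g : A -> C) :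
  (forall x, In x s -> f x = g x) -> Csum s f = Csum s g.
Proof.
  induction s as [|a s IH]; intros Hfg; [reflexivity|].
  rewrite !Csum_cons, (Hfg a (in_eq a s)), IH; [reflexivity|].
  intros x Hx. apply Hfg, in_cons, Hx.
Qed.

Lemma Csum_plus {A : Type} (s : list A) (f g : A -> C) :
  Csum s (fun x => f x + g x) = Csum s f + Csum s g.
Proof.
  induction s as [|a s IH]; [simpl; ring|].
  rewrite !Csum_cons, IH. ring.
Qed.

Lemma Csum_scal_l {A : Type} (s : list A) (k : C) (f : A -> C) :
  Csum s (fun x => k * f x) = k * Csum s f.
Proof.
  induction s as [|a s IH]; [simpl; ring|].
  rewrite !Csum_cons, IH. ring.
Qed.

Lemma Csum_scal_r {A : Type} (s : list A) (k : C) (f : A -> C) :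
  Csum s (fun x => f x * k) = Csum s f * k.
Proof.
  induction s as [|a s IH]; [simpl; ring|].
  rewrite !Csum_cons, IH. ring.
Qed.

Lemma Csum_const {A : Type} (s : list A) (k : C) :
  Csum s (fun _ => k) = RtoC (INR (length s)) * k.
Proof.
  induction s as [|a s IH]; [simpl; ring|].
  rewrite Csum_cons, IH. simpl length. rewrite S_INR, RtoC_plus. ring.
Qed.

Lemma Csum_zero {A : Type} (s : list A) : Csum s (fun _ => 0) = 0.
Proof. rewrite Csum_const. ring. Qed.

Lemma Csum_swap {A B : Type} (s : list A) (t : list B) (f : A -> B -> C) :
  Csum s (fun x => Csum t (f x)) = Csum t (fun y => Csum s (fun x => f x y)).
Proof.
  induction s as [|a s IH]; [symmetry; apply Csum_zero|].
  rewrite Csum_cons, IH, <- Csum_plus. reflexivity.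
Qed.

Lemma Csum_seq_S (m : nat) (f : nat -> C) :
  Csum (seq 0 (S m)) f = Csum (seq 0 m) f + f m.
Proof. rewrite seq_S, Csum_app. simpl. ring. Qed.

Lemma Csum_seq_shift (m : nat) (f : nat -> C) :
  Csum (seq 0 (S m)) f = f 0%nat + Csum (seq 0 m) (fun a => f (S a)).
Proof. simpl seq. now rewrite Csum_cons, <- seq_shift, Csum_map. Qed.

Lemma Cmod_Csum_le {A : Type} (s : list A) (f : A -> C) :
  Cmod (Csum s f) <= Rsum s (fun x => Cmod (f x)).
Proof.
  induction s as [|a s IH]; simpl.
  - rewrite Cmod_0. apply Rle_refl.
  - eapply Rle_trans; [apply Cmod_triangle|]. apply Rplus_le_compat_l, IH.
Qed.

Lemma Rsum_le {A : Type} (s : list A) (f g : A -> R) :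
  (forall x, f x <= g x) -> Rsum s f <= Rsum s g.
Proof. intros Hfg. induction s as [|a s IH]; simpl; [lra|]. specialize (Hfg a). lra. Qed.

(** * The group and its characters *)

Lemma Csum_grp_elems_cons (m : nat) (ms : list nat) (f : list nat -> C) :
  Csum (grp_elems (m :: ms)) f
  = Csum (seq 0 m) (fun a => Csum (grp_elems ms) (fun g => f (a :: g))).
Proof. simpl grp_elems. rewrite Csum_flat_map. apply Csum_ext_in. intros. apply Csum_map. Qed.

Lemma in_grp_elems (ms g : list nat) :
  In g (grp_elems ms) -> Forall2 (fun a m => (a < m)%nat) g ms.
Proof.
  revert g; induction ms as [|m ms IH]; simpl; intros g Hg.
  - destruct Hg as [<-|[]]. constructor.
  - apply in_flat_map in Hg as [a [Ha Hg]]. apply in_map_iff in Hg as [g' [<- Hg']].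
    apply in_seq in Ha. constructor; [lia|auto].
Qed.

Lemma grp_inv_length (ms h : list nat) :
  length h = length ms -> length (grp_inv ms h) = length ms.
Proof.
  revert h; induction ms as [|m ms IH]; intros [|a h]; simpl; try lia.
  intros Hh. f_equal. apply IH. lia.
Qed.

Lemma Csum_seq_rotate1 (m : nat) (F : nat -> C) :
  Csum (seq 0 m) (fun a => F ((a + 1) mod m)%nat) = Csum (seq 0 m) F.
Proof.
  destruct m as [|m]; [reflexivity|].
  rewrite Csum_seq_S, Csum_seq_shift, Nat.add_1_r, Nat.Div0.mod_same, Cplus_comm.
  f_equal. apply Csum_ext_in. intros a Ha. apply in_seq in Ha.
  rewrite Nat.mod_small by lia. f_equal. lia.
Qed.

Lemma Csum_seq_rotate (m b : nat) (F : nat -> C) :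
  Csum (seq 0 m) (fun a => F ((b + a) mod m)%nat) = Csum (seq 0 m) F.
Proof.
  revert F; induction b as [|b IH]; intros F.
  - apply Csum_ext_in. intros a Ha. apply in_seq in Ha. now rewrite Nat.mod_small by lia.
  - rewrite <- (Csum_seq_rotate1 m F), <- (IH (fun x => F ((x + 1) mod m)%nat)).
    apply Csum_ext_in. intros a _. f_equal.
    rewrite Nat.Div0.add_mod_idemp_l. f_equal. lia.
Qed.

Lemma Csum_grp_mul_l (ms h : list nat) (f : list nat -> C) :
  length h = length ms ->
  Csum (grp_elems ms) (fun g => f (grp_mul ms h g)) = Csum (grp_elems ms) f.
Proof.
  revert h f; induction ms as [|m ms IH]; intros [|b h] f Hh; simpl in Hh; try lia.
  - reflexivity.
  - rewrite !Csum_grp_elems_cons.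
    rewrite <- (Csum_seq_rotate m b (fun a => Csum (grp_elems ms) (fun g => f (a :: g)))).
    apply Csum_ext_in. intros a _. apply (IH h (fun g => f (_ :: g))). lia.
Qed.

Lemma gr_one_cons (m : nat) (ms : list nat) (a : nat) (g : list nat) :
  gr_one (m :: ms) (a :: g) = (if Nat.eq_dec a 0 then 1 else 0) * gr_one ms g.
Proof.
  unfold gr_one; simpl grp_one.
  destruct (list_eq_dec Nat.eq_dec (a :: g) (0%nat :: grp_one ms));
  destruct (Nat.eq_dec a 0); destruct (list_eq_dec Nat.eq_dec g (grp_one ms));
  try ring; congruence.
Qed.

Lemma Csum_gr_one_l (ms : list nat) (f : list nat -> C) :
  List.Forall (fun m => (0 < m)%nat) ms ->
  Csum (grp_elems ms) (fun g => gr_one ms g * f g) = f (grp_one ms).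
Proof.
  intros Hms; revert f; induction Hms as [|m ms Hm Hms IH]; intros f.
  - unfold gr_one. simpl. ring.
  - rewrite Csum_grp_elems_cons.
    rewrite (Csum_ext_in _ _ (fun a => (if Nat.eq_dec a 0 then 1 else 0) * f (a :: grp_one ms))).
    2:{ intros a _. rewrite <- (IH (fun g => f (a :: g))), <- Csum_scal_l.
        apply Csum_ext_in. intros g _. rewrite gr_one_cons. ring. }
    destruct m as [|m]; [lia|]. rewrite Csum_seq_shift.
    rewrite (Csum_ext_in _ _ (fun _ => 0)) by (intros a _; simpl; ring).
    rewrite Csum_zero. simpl. ring.
Qed.

(* Such a point gives the character [g |-> mono z g] of Gamma. *)
Definition root_of_unity_point (ms : list nat) (z : list C) : Prop :=
  Forall2 (fun m zi => Cpow zi m = 1) ms z.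

Lemma Cpow_mod (z : C) (m x : nat) : z ^ m = 1 -> z ^ (x mod m) = z ^ x.
Proof.
  intros Hz. rewrite (Nat.div_mod_eq x m) at 2.
  rewrite Cpow_add_r, Cpow_mult_r, Hz, Cpow_1_l. ring.
Qed.

Lemma mono_grp_mul (ms : list nat) (z : list C) (g h : list nat) :
  root_of_unity_point ms z -> length g = length ms -> length h = length ms ->
  mono z (grp_mul ms g h) = mono z g * mono z h.
Proof.
  intros Hz; revert g h; induction Hz as [|m zi ms z Hzi Hz IH];
    intros [|a g] [|b h] Hg Hh; simpl in *; try lia; [ring|].
  rewrite Cpow_mod, Cpow_add_r, IH by (auto; lia). ring.
Qed.

Lemma mono_grp_inv (ms : list nat) (z : list C) (g : list nat) :
  root_of_unity_point ms z -> Forall2 (fun a m => (a < m)%nat) g ms ->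
  mono z (grp_inv ms g) * mono z g = 1.
Proof.
  intros Hz; revert g; induction Hz as [|m zi ms z Hzi Hz IH]; intros g Hg;
    inversion Hg as [|a m' g' ms' Ha Hg']; subst; simpl; [ring|].
  rewrite Cpow_mod by auto.
  transitivity (zi ^ (m - a + a) * (mono z (grp_inv ms g') * mono z g')).
  - rewrite Cpow_add_r. ring.
  - rewrite IH, Nat.sub_add, Hzi by (auto; lia). ring.
Qed.

Lemma mono_grp_one (ms : list nat) (z : list C) : mono z (grp_one ms) = 1.
Proof.
  revert z; induction ms as [|m ms IH]; intros [|zi z]; simpl; auto.
  rewrite IH. ring.
Qed.

Lemma gr_eval_mul (ms : list nat) (z : list C) (c d : list nat -> C) :
  root_of_unity_point ms z ->
  gr_eval ms (gr_mul ms c d) z = gr_eval ms c z * gr_eval ms d z.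
Proof.
  intros Hz. unfold gr_eval, gr_mul.
  rewrite <- Csum_scal_r.
  rewrite (Csum_ext_in _ _ (fun g => Csum (grp_elems ms)
             (fun h => c h * d (grp_mul ms (grp_inv ms h) g) * mono z g)))
    by (intros g _; symmetry; apply Csum_scal_r).
  rewrite Csum_swap. apply Csum_ext_in. intros h Hh.
  pose proof (in_grp_elems _ _ Hh) as Hh_bd.
  assert (Hinv_len : length (grp_inv ms h) = length ms)
    by exact (grp_inv_length _ _ (Forall2_length Hh_bd)).
  rewrite <- (Csum_grp_mul_l ms (grp_inv ms h) (fun k => d k * mono z k)), <- Csum_scal_l
    by exact Hinv_len.
  apply Csum_ext_in. intros g Hg.
  rewrite (mono_grp_mul ms z) by (auto; exact (Forall2_length (in_grp_elems _ _ Hg))).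
  rewrite <- (Cmult_1_r (mono z g)) at 1. rewrite <- (mono_grp_inv ms z h) by auto.
  ring.
Qed.

Lemma gr_eval_one (ms : list nat) (z : list C) :
  List.Forall (fun m => (0 < m)%nat) ms -> gr_eval ms (gr_one ms) z = 1.
Proof. intros Hms. unfold gr_eval. rewrite Csum_gr_one_l by exact Hms. apply mono_grp_one. Qed.

Lemma gr_eval_pow (ms : list nat) (z : list C) (c : list nat -> C) (n : nat) :
  List.Forall (fun m => (0 < m)%nat) ms -> root_of_unity_point ms z ->
  gr_eval ms (gr_pow ms c n) z = gr_eval ms c z ^ n.
Proof.
  intros Hms Hz. induction n as [|n IH]; simpl gr_pow.
  - now apply gr_eval_one.
  - now rewrite gr_eval_mul, IH.
Qed.

Lemma Csum_geom_finite (y : C) (m : nat) :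
  Csum (seq 0 m) (fun a => y ^ a) * (1 - y) = 1 - y ^ m.
Proof.
  induction m as [|m IH]; [simpl; ring|].
  rewrite Csum_seq_S, Cmult_plus_distr_r, IH. simpl. ring.
Qed.

Lemma Csum_pow_prim_root (m b : nat) (x : C) :
  prim_root m x -> (b < m)%nat ->
  Csum (seq 0 m) (fun a => (x ^ a) ^ b) = RtoC (INR m) * (if Nat.eq_dec b 0 then 1 else 0).
Proof.
  intros [Hxm Hprim] Hb.
  rewrite (Csum_ext_in _ _ (fun a => (x ^ b) ^ a))
    by (intros a _; rewrite <- !Cpow_mult_r, Nat.mul_comm; reflexivity).
  destruct (Nat.eq_dec b 0) as [->|Hb0].
  - rewrite (Csum_ext_in _ _ (fun _ => 1)) by (intros; apply Cpow_1_l).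
    now rewrite Csum_const, length_seq.
  - assert (Hy : 1 - x ^ b <> 0).
    { intros E. apply (Hprim b); [lia|].
      transitivity (1 - (1 - x ^ b)); [ring|]. rewrite E. ring. }
    transitivity (Csum (seq 0 m) (fun a => (x ^ b) ^ a) * (1 - x ^ b) / (1 - x ^ b));
      [field; exact Hy|].
    rewrite Csum_geom_finite, <- Cpow_mult_r, Nat.mul_comm, Cpow_mult_r, Hxm, Cpow_1_l.
    unfold Cdiv. ring.
Qed.

Lemma Csum_mono_root_point (ms : list nat) (xi : list C) (g : list nat) :
  Forall2 prim_root ms xi -> Forall2 (fun a m => (a < m)%nat) g ms ->
  Csum (grp_elems ms) (fun j => mono (root_point xi j) g)
  = RtoC (INR (fold_right Nat.mul 1%nat ms)) * gr_one ms g.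
Proof.
  intros Hxi; revert g; induction Hxi as [|m x ms xi Hx Hxi IH]; intros g Hg;
    inversion Hg as [|b m' g' ms' Hb Hg']; subst.
  - unfold gr_one. simpl. ring.
  - rewrite Csum_grp_elems_cons, gr_one_cons.
    rewrite (Csum_ext_in _ _ (fun a => (x ^ a) ^ b * Csum (grp_elems ms)
                                          (fun j => mono (root_point xi j) g')))
      by (intros a _; rewrite <- Csum_scal_l; reflexivity).
    rewrite Csum_scal_r, Csum_pow_prim_root, IH by assumption.
    simpl fold_right. rewrite mult_INR, RtoC_mult. ring.
Qed.

Lemma Csum_gr_eval_root_point (ms : list nat) (xi : list C) (d : list nat -> C) :
  List.Forall (fun m => (0 < m)%nat) ms -> Forall2 prim_root ms xi ->
  Csum (grp_elems ms) (fun j => gr_eval ms d (root_point xi j))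
  = RtoC (INR (fold_right Nat.mul 1%nat ms)) * d (grp_one ms).
Proof.
  intros Hms Hxi. unfold gr_eval. rewrite Csum_swap.
  rewrite (Csum_ext_in _ _ (fun g => RtoC (INR (fold_right Nat.mul 1%nat ms)) * (gr_one ms g * d g))).
  - now rewrite Csum_scal_l, Csum_gr_one_l.
  - intros g Hg. rewrite Csum_scal_l, Csum_mono_root_point by auto using in_grp_elems. ring.
Qed.

Lemma root_point_root_of_unity (ms : list nat) (xi : list C) (j : list nat) :
  Forall2 prim_root ms xi -> Forall2 (fun a m => (a < m)%nat) j ms ->
  root_of_unity_point ms (root_point xi j).
Proof.
  intros Hxi; revert j; induction Hxi as [|m x ms xi [Hx _] Hxi IH]; intros j Hj;
    inversion Hj as [|a m' j' ms' Ha Hj']; subst; simpl; constructor.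
  - rewrite <- Cpow_mult_r, Nat.mul_comm, Cpow_mult_r, Hx. apply Cpow_1_l.
  - exact (IH j' Hj').
Qed.

Lemma grp_order_pos (ms : list nat) :
  List.Forall (fun m => (0 < m)%nat) ms -> (0 < fold_right Nat.mul 1%nat ms)%nat.
Proof. induction 1; simpl; lia. Qed.

Lemma RtoC_INR_neq_0 (n : nat) : n <> 0%nat -> RtoC (INR n) <> 0.
Proof. intros Hn E. apply RtoC_inj in E. exact (not_0_INR n Hn E). Qed.

Lemma coef_id_mean (ms : list nat) (xi : list C) (c : list nat -> C) (n : nat) :
  List.Forall (fun m => (0 < m)%nat) ms -> Forall2 prim_root ms xi ->
  coef_id ms c n = / RtoC (INR (fold_right Nat.mul 1%nat ms))
                   * Csum (grp_elems ms) (fun j => gr_eval ms c (root_point xi j) ^ n).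
Proof.
  intros Hms Hxi.
  assert (Hord : RtoC (INR (fold_right Nat.mul 1%nat ms)) <> 0).
  { apply RtoC_INR_neq_0. pose proof (grp_order_pos ms Hms). lia. }
  rewrite (Csum_ext_in _ _ (fun j => gr_eval ms (gr_pow ms c n) (root_point xi j))).
  - rewrite Csum_gr_eval_root_point by assumption. unfold coef_id. field. exact Hord.
  - intros j Hj. symmetry. apply gr_eval_pow; [assumption|].
    apply root_point_root_of_unity, in_grp_elems; assumption.
Qed.

Close Scope C_scope.

(** * The logarithm series *)

Lemma is_series_ball {K : AbsRing} {V : NormedModule K} (a : nat -> V) (l : V) :
  is_series a l <-> forall eps : posreal, eventually (fun n => ball l eps (sum_n a n)).
Proof. exact (@filterlim_locally nat V eventually _ (sum_n a) l). Qed.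

Lemma sum_n_fst (u : nat -> C) (n : nat) : fst (sum_n u n) = sum_n (fun k => fst (u k)) n.
Proof. induction n as [|n IH]; [now rewrite !sum_O|]. now rewrite !sum_Sn, <- IH. Qed.

Lemma sum_n_snd (u : nat -> C) (n : nat) : snd (sum_n u n) = sum_n (fun k => snd (u k)) n.
Proof. induction n as [|n IH]; [now rewrite !sum_O|]. now rewrite !sum_Sn, <- IH. Qed.

Lemma is_series_C (u : nat -> C) (l : C) :
  is_series u l <->
  is_series (fun n => fst (u n)) (fst l) /\ is_series (fun n => snd (u n)) (snd l).
Proof.
  rewrite !is_series_ball. split.
  - intros H. split; intros eps; generalize (H eps); apply filter_imp;
      intros n [Hfst Hsnd].
    + now rewrite <- sum_n_fst.
    + now rewrite <- sum_n_snd.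
  - intros [Hfst Hsnd] eps. generalize (filter_and _ _ (Hfst eps) (Hsnd eps)).
    apply filter_imp. intros n. rewrite <- sum_n_fst, <- sum_n_snd. easy.
Qed.

Lemma is_series_Csum {A : Type} (s : list A) (u : A -> nat -> C) (l : A -> C) :
  (forall x, In x s -> is_series (u x) (l x)) ->
  is_series (fun n => Csum s (fun x => u x n)) (Csum s l).
Proof.
  induction s as [|a s IH]; intros Hu.
  - apply (is_series_ext (fun _ => zero)); [reflexivity|].
    apply (filterlim_ext (fun _ => zero)); [intros n; symmetry; apply sum_n_m_const_zero|].
    apply filterlim_const.
  - exact (is_series_plus _ _ _ _ (Hu a (in_eq a s)) (IH (fun x Hx => Hu x (in_cons a x s Hx)))).
Qed.

Lemma is_series_Cgeom (z : C) :
  Cmod z < 1 -> is_series (fun n => (z ^ n)%C) (/ (1 - z))%C.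
Proof.
  intros Hz.
  assert (Hz1 : (1 - z)%C <> 0%C).
  { apply Cminus_eq_contra. intros E. rewrite <- E, Cmod_1 in Hz. lra. }
  assert (Hpartial : forall n, sum_n (fun k => (z ^ k)%C) n = ((1 - z ^ S n) / (1 - z))%C).
  { induction n as [|n IH].
    - rewrite sum_O. simpl. field. exact Hz1.
    - rewrite sum_Sn, IH. change plus with Cplus. simpl. field. exact Hz1. }
  assert (Hz1_pos : 0 < Cmod (1 - z)) by (apply Cmod_gt_0, Hz1).
  apply filterlim_locally_ball_norm. intros eps.
  assert (Heps : 0 < eps * Cmod (1 - z)) by (apply Rmult_lt_0_compat; [apply cond_pos|exact Hz1_pos]).
  pose proof (is_lim_seq_geom (Cmod z)) as Hgeom.
  rewrite Rabs_pos_eq in Hgeom by apply Cmod_ge_0.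
  apply is_lim_seq_spec in Hgeom; [|exact Hz].
  generalize (Hgeom (mkposreal _ Heps)). apply filter_imp. simpl. intros n Hn.
  unfold ball_norm. change norm with Cmod. change minus with Cminus.
  rewrite Hpartial.
  replace ((1 - z ^ S n) / (1 - z) - / (1 - z))%C with (- (z ^ S n) / (1 - z))%C
    by (field; exact Hz1).
  rewrite Cmod_div, Cmod_opp, Cmod_pow by exact Hz1.
  rewrite Rminus_0_r, Rabs_pos_eq in Hn by (apply pow_le, Cmod_ge_0).
  apply Rlt_div_l; [exact Hz1_pos|].
  simpl. pose proof (Cmod_ge_0 z). pose proof (pow_le (Cmod z) n (Cmod_ge_0 z)). nra.
Qed.

Definition log_term (w : C) (n : nat) : C :=
  match n with O => 0%C | S _ => (- w ^ n / INR n)%C end.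

Lemma Cmod_log_term_le (w : C) (n : nat) : Cmod (log_term w n) <= Cmod w ^ n.
Proof.
  destruct n as [|n]; cbn [log_term].
  - rewrite Cmod_0. simpl. lra.
  - assert (Hn : 1 <= INR (S n)) by (apply (le_INR 1); lia).
    rewrite Cmod_div, Cmod_opp, Cmod_pow, Cmod_R, Rabs_pos_eq by (try (apply RtoC_INR_neq_0; lia); lra).
    apply Rle_div_l; [lra|].
    pose proof (pow_le (Cmod w) (S n) (Cmod_ge_0 w)). nra.
Qed.

Section LogSeriesComponent.

(* [p] is [fst] or [snd]. *)
Variable p : C -> R.
Hypothesis p_scal : forall (r : R) (z : C), p (RtoC r * z)%C = r * p z.
Hypothesis p_le_Cmod : forall z, Rabs (p z) <= Cmod z.
Hypothesis is_series_p : forall u l, is_series u l -> is_series (fun n => p (u n)) (p l).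
Variable w : C.
Hypothesis w_lt_1 : Cmod w < 1.

Lemma CV_radius_log_component : Rbar_lt 1 (CV_radius (fun n => p (log_term w n))).
Proof.
  pose proof (Cmod_ge_0 w) as Hw0.
  (* any radius in (1, 1 / |w|) will do *)
  set (r := 2 / (1 + Cmod w)).
  assert (Hr : 1 < r /\ Cmod w * r < 1).
  { unfold r. split; apply Rmult_lt_reg_r with (1 + Cmod w); field_simplify; lra. }
  apply (Rbar_lt_le_trans _ r); [simpl; lra|].
  apply (CV_radius_bounded _). exists 1. intros n.
  rewrite Rabs_mult, (Rabs_pos_eq (r ^ n)) by (apply pow_le; lra).
  apply Rle_trans with (Cmod w ^ n * r ^ n).
  - apply Rmult_le_compat_r; [apply pow_le; lra|].
    eapply Rle_trans; [apply p_le_Cmod|apply Cmod_log_term_le].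
  - rewrite <- Rpow_mult_distr, <- (pow1 n). apply pow_incr. nra.
Qed.

Lemma PSeries_derive_log_component (t : R) :
  0 <= t <= 1 ->
  PSeries (PS_derive (fun n => p (log_term w n))) t = p (- w / (1 - RtoC t * w))%C.
Proof.
  intros Ht.
  assert (Htw : Cmod (RtoC t * w) < 1).
  { rewrite Cmod_mult, Cmod_R, Rabs_pos_eq by lra. pose proof (Cmod_ge_0 w). nra. }
  apply is_series_unique.
  generalize (is_series_p _ _ (is_series_scal (- w)%C _ _ (is_series_Cgeom _ Htw))).
  apply is_series_ext. intros k.
  unfold PS_derive. cbn [log_term].
  rewrite Rmult_comm, <- !p_scal. f_equal.
  change ((- w * (RtoC t * w) ^ k)%C
          = (RtoC (t ^ k) * (RtoC (INR (S k)) * (- w ^ S k / INR (S k))))%C).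
  rewrite RtoC_pow, Cpow_mult_l, Cpow_S. field.
  apply RtoC_INR_neq_0. lia.
Qed.

Lemma is_series_log_component (F : R -> R) :
  F 0 = 0 ->
  (forall t, 0 <= t <= 1 -> is_derive F t (p (- w / (1 - RtoC t * w))%C)) ->
  is_series (fun n => p (log_term w n)) (F 1).
Proof.
  intros HF0 HF.
  set (a := fun n => p (log_term w n)).
  assert (Hrad : forall t, 0 <= t <= 1 -> Rbar_lt (Rabs t) (CV_radius a)).
  { intros t Ht. apply (Rbar_le_lt_trans _ 1); [simpl; rewrite Rabs_pos_eq; lra|].
    apply CV_radius_log_component. }
  assert (Ha0 : a 0%nat = 0).
  { unfold a. cbn [log_term]. pose proof (p_scal 0 0%C) as H0.
    rewrite Cmult_0_l, Rmult_0_l in H0. exact H0. }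
  assert (HF1 : PSeries a 1 = F 1).
  { assert (E : PSeries a 0 - F 0 = PSeries a 1 - F 1).
    { apply (eq_is_derive (fun t => PSeries a t - F t)); [|lra]. intros t Ht.
      replace (@zero R_NormedModule) with (PSeries (PS_derive a) t - p (- w / (1 - RtoC t * w))%C)
        by (unfold a; rewrite PSeries_derive_log_component by exact Ht; apply Rminus_diag).
      apply (is_derive_minus (PSeries a) F); [apply is_derive_PSeries, Hrad, Ht|apply HF, Ht]. }
    rewrite PSeries_0, Ha0, HF0 in E. lra. }
  rewrite <- HF1.
  apply (is_series_ext (fun n => a n * 1 ^ n)); [intros n; rewrite pow1; apply Rmult_1_r|].
  apply is_pseries_R, PSeries_correct, CV_radius_inside, Hrad. lra.
Qed.

End LogSeriesComponent.

Lemma is_derive_log_modulus (a b t : R) :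
  0 < 1 - t * a ->
  is_derive (fun t => ln ((1 - t * a) ^ 2 + (t * b) ^ 2) / 2) t
    (fst (- (a, b) / (1 - RtoC t * (a, b)))%C).
Proof.
  intros Hpos. assert (Hnorm : 0 < (1 - t * a) ^ 2 + (t * b) ^ 2) by nra.
  auto_derive; [lra|].
  unfold Cdiv, Cmult, Copp, Cinv, Cminus, Cplus, RtoC. simpl. field. nra.
Qed.

Lemma is_derive_log_argument (a b t : R) :
  0 < 1 - t * a ->
  is_derive (fun t => atan (- (t * b) / (1 - t * a))) t
    (snd (- (a, b) / (1 - RtoC t * (a, b)))%C).
Proof.
  intros Hpos. assert (Hnorm : 0 < (1 - t * a) ^ 2 + (t * b) ^ 2) by nra.
  auto_derive; [lra|].
  unfold Cdiv, Cmult, Copp, Cinv, Cminus, Cplus, RtoC. simpl. field. nra.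
Qed.

Lemma ln_sqrt (x : R) : 0 < x -> ln (sqrt x) = ln x / 2.
Proof.
  intros Hx. rewrite <- (sqrt_sqrt x) at 2 by lra.
  rewrite ln_mult by (apply sqrt_lt_R0, Hx). field.
Qed.

Lemma is_series_log_term (w : C) :
  Cmod w < 1 -> is_series (log_term w) (Clog (1 - w)%C).
Proof.
  intros Hw. destruct w as [a b].
  assert (Ha : Rabs a < 1) by exact (Rle_lt_trans _ _ _ (re_le_Cmod (a, b)) Hw).
  apply Rabs_lt_between in Ha.
  assert (Hdom : forall t, 0 <= t <= 1 -> 0 < 1 - t * a) by (intros t Ht; nra).
  apply is_series_C. split.
  - replace (fst (Clog (1 - (a, b))%C)) with (ln ((1 - 1 * a) ^ 2 + (1 * b) ^ 2) / 2).
    + apply (is_series_log_component fst) with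
        (F := fun t => ln ((1 - t * a) ^ 2 + (t * b) ^ 2) / 2).
      * intros r [x y]. simpl. ring.
      * exact re_le_Cmod.
      * intros u l Hul. exact (proj1 (proj1 (is_series_C u l) Hul)).
      * exact Hw.
      * rewrite Rmult_0_l, Rmult_0_l, Rminus_0_r, pow1, pow_i, Rplus_0_r, ln_1 by lia. lra.
      * intros t Ht. apply is_derive_log_modulus, Hdom, Ht.
    + simpl. unfold Cmod. simpl. rewrite ln_sqrt by nra. f_equal. f_equal; ring.
  - replace (snd (Clog (1 - (a, b))%C)) with (atan (- (1 * b) / (1 - 1 * a))).
    + apply (is_series_log_component snd) with
        (F := fun t => atan (- (t * b) / (1 - t * a))).
      * intros r [x y]. simpl. ring.
      * intros z. exact (Rle_trans _ _ _ (Rmax_r _ _) (Rmax_Cmod z)).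
      * intros u l Hul. exact (proj2 (proj1 (is_series_C u l) Hul)).
      * exact Hw.
      * rewrite Rmult_0_l, Ropp_0, Rdiv_0_l. apply atan_0.
      * intros t Ht. apply is_derive_log_argument, Hdom, Ht.
    + (* Re (1 - w) > 0 selects the first branch of [Arg] *)
      unfold Clog, Arg. simpl. destruct (Rlt_dec 0 (1 + - a)) as [_|]; [|lra].
      f_equal. field. lra.
Qed.

Lemma Cmod_prim_root (m : nat) (x : C) : (0 < m)%nat -> prim_root m x -> Cmod x = 1.
Proof.
  intros Hm [Hx _].
  assert (Hpow : Cmod x ^ m = 1) by (rewrite <- Cmod_pow, Hx; apply Cmod_1).
  pose proof (Cmod_ge_0 x) as Hx0.
  destruct (Rtotal_order (Cmod x) 1) as [Hlt|[Heq|Hgt]]; [|exact Heq|].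
  - pose proof (pow_lt_1_compat (Cmod x) m (conj Hx0 Hlt) Hm). lra.
  - pose proof (Rlt_pow_R1 (Cmod x) m Hgt Hm). lra.
Qed.

Lemma Cmod_root_point (ms : list nat) (xi : list C) (j : list nat) :
  List.Forall (fun m => (0 < m)%nat) ms -> Forall2 prim_root ms xi ->
  List.Forall (fun z => Cmod z = 1) (root_point xi j).
Proof.
  intros Hms Hxi; revert j; induction Hxi as [|m x ms xi Hx Hxi IH]; intros [|a j];
    simpl; constructor; inversion Hms; subst.
  - rewrite Cmod_pow, (Cmod_prim_root m x) by assumption. apply pow1.
  - now apply IH.
Qed.

Lemma Cmod_mono (z : list C) (g : list nat) :
  List.Forall (fun zi => Cmod zi = 1) z -> Cmod (mono z g) = 1.
Proof.
  intros Hz; revert g; induction Hz as [|zi z Hzi Hz IH]; intros [|a g]; simpl;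
    try apply Cmod_1.
  rewrite Cmod_mult, Cmod_pow, Hzi, IH, pow1. apply Rmult_1_l.
Qed.

Lemma Cmod_gr_eval_le (ms : list nat) (c : list nat -> C) (z : list C) :
  List.Forall (fun zi => Cmod zi = 1) z -> Cmod (gr_eval ms c z) <= l1norm ms c.
Proof.
  intros Hz. eapply Rle_trans; [apply Cmod_Csum_le|].
  apply Rsum_le. intros g. rewrite Cmod_mult, Cmod_mono by exact Hz. lra.
Qed.

Lemma mGamma_term_mean (ms : list nat) (xi : list C) (c : list nat -> C) (lam : C) (n : nat) :
  List.Forall (fun m => (0 < m)%nat) ms -> Forall2 prim_root ms xi ->
  mGamma_term ms c lam n
  = (/ RtoC (INR (fold_right Nat.mul 1%nat ms))
     * Csum (grp_elems ms) (fun j => log_term (lam * gr_eval ms c (root_point xi j)) n))%C.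
Proof.
  intros Hms Hxi.
  assert (Hord : RtoC (INR (fold_right Nat.mul 1%nat ms)) <> 0%C).
  { apply RtoC_INR_neq_0. pose proof (grp_order_pos ms Hms). lia. }
  destruct n as [|n].
  - cbn [mGamma_term log_term]. rewrite Csum_zero. ring.
  - assert (Hn : RtoC (INR (S n)) <> 0%C) by (apply RtoC_INR_neq_0; lia).
    rewrite (Csum_ext_in _ (fun j => log_term (lam * gr_eval ms c (root_point xi j)) (S n))
               (fun j => (- lam ^ S n / INR (S n)) * gr_eval ms c (root_point xi j) ^ S n)%C)
      by (intros j _; cbn [log_term]; rewrite Cpow_mult_l; field; exact Hn).
    cbn [mGamma_term]. rewrite (coef_id_mean ms xi), Csum_scal_l by assumption.
    field. split; assumption.
Qed.

Theorem corollary6p1 (ms : list nat) (xi : list C) (c : list nat -> C) (lam : C) :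
  List.Forall (fun m => (0 < m)%nat) ms ->
  length xi = length ms ->
  List.Forall2 prim_root ms xi ->
  reciprocal ms c ->
  Cmod lam * l1norm ms c < 1 ->
  @is_series C_AbsRing C_NormedModule (mGamma_term ms c lam)
    (Cmult (Cinv (RtoC (INR (fold_right Nat.mul 1%nat ms))))
       (Csum (grp_elems ms)
          (fun j => Clog (Cminus (RtoC 1)
                        (Cmult lam (gr_eval ms c (root_point xi j))))))).
Proof.
  intros Hms _ Hxi _ Hk.
  assert (Hsmall : forall j, Cmod (lam * gr_eval ms c (root_point xi j))%C < 1).
  { intros j. rewrite Cmod_mult. eapply Rle_lt_trans; [|exact Hk].
    apply Rmult_le_compat_l; [apply Cmod_ge_0|].
    apply Cmod_gr_eval_le, (Cmod_root_point ms); assumption. }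
  pose proof (is_series_Csum (grp_elems ms)
    (fun j => log_term (lam * gr_eval ms c (root_point xi j))%C) _
    (fun j _ => is_series_log_term _ (Hsmall j))) as Hlog.
  apply (is_series_scal (/ RtoC (INR (fold_right Nat.mul 1%nat ms)))%C) in Hlog.
  revert Hlog. apply is_series_ext. intros n.
  symmetry. apply (mGamma_term_mean ms xi); assumption.
Qed.
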